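(* Let $C$ be a normal, closed cone with nonempty interior in a real Banach space. Let $f:\operatorname{int} C\to\operatorname{int} C$ be order-preserving and subhomogeneous, and suppose that $C$ is regular, or $f$ is $\gamma$-condensing, or $f$ is $\tau$-condensing. If $u$ is a fixed point of $f$ and $\operatorname{Fix}(f)$ is bounded in $d_T$, then for any $R>r>0$ with $\operatorname{Fix}(f)\subset B_r(u)$ there is $k\in\mathbb{N}$ such that $f^k(\overline{B_R(u)})\subset B_r(u)$. In particular, if $f$ has a unique fixed point $u\in\operatorname{int}C$, then $f^k(x)\to u$ for all $x\in\operatorname{int} C$.
   Context: A closed cone $C$ (closed convex, $\lambda C\subseteq C$ for $\lambda\ge0$, $C\cap(-C)=\{0\}$) induces the order $x\le y$ iff $y-x\in C$. $C$ is normal if there is $\kappa$ with $\|x\|\le\kappa\|y\|$ whenever $0\le x\le y$; regular if every decreasing sequence in $C$ converges. Thompson's metric on $\operatorname{int}C$: $d_T(x,y)=\log\inf\{\beta\ge1:\beta^{-1}x\le y\le\beta x\}$; $B_R(u)=\{y\in\operatorname{int}C: d_T(u,y)<R\}$, and $\overline{B_R(u)}=[e^{-R}u,e^Ru]=\{z: e^{-R}u\le z\le e^Ru\}$. $f$ is order-preserving if $x\le y\Rightarrow f(x)\le f(y)$; subhomogeneous if $f(tx)\le tf(x)$ for $t\ge1$. $\gamma$ and $\tau$ are Kuratowski's measures of noncompactness for the norm and for $d_T$ respectively ($\inf$ of $d$ such that the set has a finite cover by sets of diameter $\le d$); a continuous map is $\gamma$- (resp. $\tau$-) condensing if it strictly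 decreases $\gamma$ (resp. $\tau$) on every bounded (resp. $d_T$-bounded) set of positive measure. *)

From HB Require Import structures.
From mathcomp Require Import all_boot all_order all_algebra.
From mathcomp Require Import all_classical all_reals all_analysis.
Set Implicit Arguments. Unset Strict Implicit. Unset Printing Implicit Defensive.
Import Order.TTheory GRing.Theory Num.Theory.
Import numFieldNormedType.Exports.
Local Open Scope classical_set_scope.
Local Open Scope ring_scope.

Section ConeDefs.
Variables (R : realType) (V : normedModType R).

Definition closed_cone (C : set V) : Prop :=
  [/\ closed C,
      (forall x y (l : R), C x -> C y -> 0 <= l -> l <= 1 -> C (l *: x + (1 - l) *: y)),
      (forall x (l : R), C x -> 0 <= l -> C (l *: x)) &
      (forall x, C x -> C (- x) -> x = 0)].

Definition cle (C : set V) (x y : V) : Prop := C (y - x).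

Definition normal_cone (C : set V) : Prop :=
  exists kappa : R, forall x y, cle C 0 x -> cle C x y -> `|x| <= kappa * `|y|.

Definition regular_cone (C : set V) : Prop :=
  forall u : nat -> V, (forall n, C (u n)) -> (forall n, cle C (u n.+1) (u n)) ->
    exists l : V, u @ \oo --> l.

Definition thompson (C : set V) (x y : V) : R :=
  ln (inf [set b : R | 1 <= b /\ cle C (b^-1 *: x) y /\ cle C y (b *: x)]).

Definition tball (C : set V) (u : V) (r : R) : set V :=
  [set y | interior C y /\ thompson C u y < r].

(* closed Thompson ball, \overline{B_R(u)} = [e^{-R} u, e^R u] *)
Definition tcball (C : set V) (u : V) (r : R) : set V :=
  [set z | cle C (expR (- r) *: u) z /\ cle C z (expR r *: u)].

Definition order_preserving_on (C : set V) (f : V -> V) : Prop :=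
  forall x y, interior C x -> interior C y -> cle C x y -> cle C (f x) (f y).

Definition subhomogeneous_on (C : set V) (f : V -> V) : Prop :=
  forall x (t : R), interior C x -> 1 <= t -> cle C (f (t *: x)) (t *: f x).

Definition fixpts (C : set V) (f : V -> V) : set V :=
  [set x | interior C x /\ f x = x].

Definition thompson_bounded (C : set V) (S : set V) : Prop :=
  exists M : R, forall x y, S x -> S y -> thompson C x y <= M.

Definition norm_bounded (S : set V) : Prop :=
  exists M : R, forall x, S x -> `|x| <= M.

(* Kuratowski measure of noncompactness w.r.t. a distance function [dist]:
   inf of d >= 0 such that S is covered by finitely many subsets of diameter <= d
   (subsets may be taken inside S w.l.o.g.). Value in \bar R (+oo if no cover). *)
Definition kuratowski (dist : V -> V -> R) (S : set V) : \bar R :=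
  ereal_inf [set d%:E | d in
    [set d : R | 0 <= d /\
      exists (n : nat) (A : nat -> set V),
        (forall i, A i `<=` S) /\
        (forall i x y, A i x -> A i y -> dist x y <= d) /\
        (forall x, S x -> exists i, (i < n)%N /\ A i x)]].

Definition gamma_mnc (S : set V) : \bar R := kuratowski (fun x y => `|x - y|) S.
Definition tau_mnc (C : set V) (S : set V) : \bar R := kuratowski (thompson C) S.

Definition gamma_condensing (C : set V) (f : V -> V) : Prop :=
  {within interior C, continuous f} /\
  forall S, S `<=` interior C -> norm_bounded S -> (0 < gamma_mnc S)%E ->
    (gamma_mnc (f @` S) < gamma_mnc S)%E.

Definition tau_condensing (C : set V) (f : V -> V) : Prop :=
  {within interior C, continuous f} /\
  forall S, S `<=` interior C -> thompson_bounded C S -> (0 < tau_mnc C S)%E ->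
    (tau_mnc C (f @` S) < tau_mnc C S)%E.

End ConeDefs.

(* Fix a fixed point [u] of [f] and [Rad >= 0];
   the closed Thompson ball around [u] is the order interval
   [[e^-Rad u, e^Rad u]], and subhomogeneity makes it [f]-invariant.  Hence the
   orbits of its two endpoints are monotone (increasing, resp. decreasing) and
   squeeze the orbit of every point of the ball.
   - Monotone orbits in the ball converge: directly if [C] is regular; if [f]
     is condensing, the range of an orbit cannot have positive measure of
     noncompactness (its image under [f] covers all of it but one point), so it
     is totally bounded, and a totally bounded monotone sequence in a normal
     cone is Cauchy.
   - A limit of an orbit lying in [int C] is a fixed point (monotonicity and
     subhomogeneity compare [f] at the limit with [f] along the orbit).
   So both endpoint orbits converge to fixed points in [B_r(u)], which gives
   the first claim.  When [u] is the only fixed point, every orbit eventually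
   enters every [B_r(u)], and normality converts Thompson into norm closeness. *)

From HB Require Import structures.
From mathcomp Require Import all_boot all_order all_algebra.
From mathcomp Require Import all_classical all_reals all_analysis.
From mathcomp Require Import lra ring.
Import Order.TTheory GRing.Theory Num.Theory.
Import numFieldNormedType.Exports.
Set Implicit Arguments. Unset Strict Implicit. Unset Printing Implicit Defensive.
Local Open Scope classical_set_scope.
Local Open Scope ring_scope.

Section ConeOrder.
Variables (R : realType) (V : normedModType R) (C : set V).
Hypothesis hC : closed_cone C.
Hypothesis C0 : C 0.

(* A closed cone is closed under addition: x + y = 2 (x/2 + y/2). *)
Lemma cone_add x y : C x -> C y -> C (x + y).
Proof.
case: hC => _ hconv hscale _ Cx Cy.
have Cmid : C (2^-1 *: x + (1 - 2^-1) *: y) by apply: hconv => //; lra.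
have := hscale _ 2 Cmid; rewrite scalerDr !scalerA.
have -> : (2 : R) * 2^-1 = 1 by field.
have -> : (2 : R) * (1 - 2^-1) = 1 by field.
by rewrite !scale1r; apply; lra.
Qed.

Lemma cone_scale t x : 0 <= t -> C x -> C (t *: x).
Proof. by case: hC => _ _ hscale _ t0 Cx; apply: hscale. Qed.

Lemma cle_refl x : cle C x x.
Proof. by rewrite /cle subrr. Qed.

Lemma cle_trans x y z : cle C x y -> cle C y z -> cle C x z.
Proof. by rewrite /cle => hxy hyz; have := cone_add hyz hxy; rewrite addrA subrK. Qed.

Lemma cle_antisym x y : cle C x y -> cle C y x -> x = y.
Proof.
rewrite /cle => hxy hyx; case: hC => _ _ _ hpointed.
by apply/eqP; rewrite eq_sym -subr_eq0; apply/eqP/hpointed; rewrite ?opprB.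
Qed.

Lemma cle_scale t x y : 0 <= t -> cle C x y -> cle C (t *: x) (t *: y).
Proof. by rewrite /cle -scalerBr; apply: cone_scale. Qed.

Lemma cle_scalar t s x : C x -> t <= s -> cle C (t *: x) (s *: x).
Proof. by rewrite /cle -scalerBl => Cx ts; apply: cone_scale; rewrite ?subr_ge0. Qed.

Lemma cle_divl t x y : 0 < t -> cle C x (t *: y) -> cle C (t^-1 *: x) y.
Proof.
move=> t0 /(cle_scale (_ : 0 <= t^-1)).
by rewrite scalerA mulVf ?gt_eqF // scale1r; apply; rewrite invr_ge0 ltW.
Qed.

Lemma cle_divr t x y : 0 < t -> cle C (t *: x) y -> cle C x (t^-1 *: y).
Proof.
move=> t0 /(cle_scale (_ : 0 <= t^-1)).
by rewrite scalerA mulVf ?gt_eqF // scale1r; apply; rewrite invr_ge0 ltW.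
Qed.

Lemma cle_chain (s : nat -> V) : (forall k, cle C (s k) (s k.+1)) ->
  forall m n, (m <= n)%N -> cle C (s m) (s n).
Proof.
move=> step m n /subnK <-; elim: (n - m)%N => [|d IH]; first exact: cle_refl.
by rewrite addSn; apply: cle_trans IH (step _).
Qed.

Lemma interiorP x :
  interior C x -> exists2 e : R, 0 < e & forall v, `|v| < e -> C (x + v).
Proof.
move=> /nbhs_ballP [e e0 he]; exists e => // v hv; apply: he.
by rewrite -ball_normE /= opprD addrA subrr add0r normrN.
Qed.

Lemma interiorW x (e : R) :
  0 < e -> (forall v, `|v| < e -> C (x + v)) -> interior C x.
Proof.
move=> e0 he; apply/nbhs_ballP; exists e => // y; rewrite -ball_normE /= => hy.
by have := he (y - x); rewrite addrCA subrr addr0; apply; rewrite distrC.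
Qed.

Lemma interior_cle x y : interior C x -> cle C x y -> interior C y.
Proof.
move=> /interiorP [e e0 he] hxy; apply: (interiorW e0) => v hv.
by rewrite -[y](subrK x) -addrA; apply: cone_add hxy (he _ hv).
Qed.

Lemma interior_scale t x : 0 < t -> interior C x -> interior C (t *: x).
Proof.
move=> t0 /interiorP [e e0 he]; apply: (@interiorW _ (t * e)); first exact: mulr_gt0.
move=> v hv.
have -> : t *: x + v = t *: (x + t^-1 *: v).
  by rewrite scalerDr scalerA mulfV ?scale1r // gt_eqF.
apply/cone_scale/he; first exact: ltW.
by rewrite normrZ ger0_norm ?invr_ge0 ?ltW // ltr_pdivrMl.
Qed.

Lemma interior_absorbing x y :
  interior C x -> exists2 eta : R, 0 < eta & cle C (eta *: y) x.
Proof.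
move=> /interiorP [e e0 he].
have y1 : 0 < `|y| + 1 by rewrite ltr_wpDl.
have d0 : 0 < e / (2 * (`|y| + 1)) by apply/divr_gt0/mulr_gt0.
exists (e / (2 * (`|y| + 1))) => //; apply: he.
rewrite normrN normrZ ger0_norm ?ltW // mulrAC ltr_pdivrMr ?mulr_gt0 //.
have := normr_ge0 y; nra.
Qed.

Lemma cle_limit_lower (s : nat -> V) l a : s @ \oo --> l ->
  (\forall k \near \oo, cle C a (s k)) -> cle C a l.
Proof.
move=> sl ev; case: hC => Ccl _ _ _.
exact: (closed_cvg _ Ccl ev _ (cvgB sl (cvg_cst a))).
Qed.

Lemma cle_limit_upper (s : nat -> V) l a : s @ \oo --> l ->
  (\forall k \near \oo, cle C (s k) a) -> cle C l a.
Proof.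
move=> sl ev; case: hC => Ccl _ _ _.
exact: (closed_cvg _ Ccl ev _ (cvgB (cvg_cst a) sl)).
Qed.

Lemma cle_of_scaled x y : (forall c : R, 1 < c -> cle C x (c *: y)) -> cle C x y.
Proof.
move=> H; case: hC => Ccl _ _ _.
have cv : (fun c : R => c *: y - x) @ 1^'+ --> 1 *: y - x.
  by apply: cvgB; [apply: cvgZr_tmp; exact: cvg_at_right_filter | exact: cvg_cst].
rewrite scale1r in cv; apply: (closed_cvg _ Ccl _ _ cv).
by near=> c; apply: H; near: c; exact: nbhs_right_gt.
Unshelve. all: end_near.
Qed.

Lemma interior_limit_absorb (s : nat -> V) l (c : R) :
  interior C l -> s @ \oo --> l -> 1 < c ->
  \forall k \near \oo, cle C (s k) (c *: l) /\ cle C l (c *: s k).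
Proof.
move=> il sl c1; have c0 : 0 < c by lra.
have c10 : 0 < c - 1 by lra.
have [d d0 hd] := interiorP (interior_scale c10 il).
near=> k.
have sk_near : `|l - s k| < d / c.
  by near: k; exact: (cvgr_dist_lt _ _ sl _ (divr_gt0 d0 c0)).
split; rewrite /cle.
- have -> : c *: l - s k = (c - 1) *: l + (l - s k).
    by rewrite scalerBl scale1r addrA subrK.
  by apply: hd; apply: lt_le_trans sk_near _; rewrite ler_pdivrMr // ler_peMr //; lra.
- have -> : c *: s k - l = (c - 1) *: l + c *: (s k - l).
    by rewrite scalerBl scale1r scalerBr [RHS]addrC [RHS]addrA subrK.
  apply: hd; rewrite normrZ ger0_norm ?ltW // distrC.
  by rewrite mulrC -ltr_pdivlMr.
Unshelve. all: end_near.
Qed.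

End ConeOrder.

Section Thompson.
Variables (R : realType) (V : normedModType R) (C : set V).
Hypothesis hC : closed_cone C.
Hypothesis C0 : C 0.

Definition thompson_set (x y : V) : set R :=
  [set b | 1 <= b /\ cle C (b^-1 *: x) y /\ cle C y (b *: x)].

Lemma thompson_set_inf x y b :
  thompson_set x y b -> 1 <= inf (thompson_set x y) <= b.
Proof.
move=> hb; apply/andP; split; first by apply: lb_le_inf; [exists b | move=> z []].
by apply: ge_inf => //; exists 1 => z [].
Qed.

(* Two interior points are always comparable, so [thompson_set] is nonempty. *)
Lemma interior_comparable x y : interior C x -> interior C y ->
  exists b : R, [/\ 1 <= b, cle C (b^-1 *: x) y & cle C y (b *: x)].
Proof.
move=> ix iy.
have [e1 e10 h1] := interior_absorbing x iy.
have [e2 e20 h2] := interior_absorbing y ix.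
set b := Num.max 1 (Num.max e1^-1 e2^-1).
have b1 : 1 <= b by rewrite le_max lexx.
have be1 : e1^-1 <= b by rewrite !le_max lexx orbT.
have be2 : e2^-1 <= b by rewrite !le_max lexx !orbT.
exists b; split => //.
- apply: (cle_trans hC _ h1); apply: (cle_scalar hC (interior_subset ix)).
  by rewrite -(invrK e1) lef_pV2 ?posrE ?invr_gt0 //; lra.
- apply: (cle_trans hC (cle_divr hC e20 h2)).
  exact: (cle_scalar hC (interior_subset ix)).
Qed.

Lemma thompson_le x y b : 1 <= b -> cle C (b^-1 *: x) y -> cle C y (b *: x) ->
  thompson C x y <= ln b.
Proof.
move=> b1 h1 h2; have /andP[i1 i2] := thompson_set_inf (conj b1 (conj h1 h2)).
by rewrite /thompson -/(thompson_set x y) ler_ln // posrE; lra.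
Qed.

Lemma thompson_ge0 x y : interior C x -> interior C y -> 0 <= thompson C x y.
Proof.
move=> ix iy; have [b [b1 h1 h2]] := interior_comparable ix iy.
by have /andP[i1 _] := thompson_set_inf (conj b1 (conj h1 h2)); apply: ln_ge0.
Qed.

Lemma thompson_self x : thompson C x x <= 0.
Proof.
by have := @thompson_le x x 1 (lexx _); rewrite invr1 scale1r ln1; apply; exact: cle_refl.
Qed.

Lemma thompson_lt x y r : interior C x -> interior C y -> thompson C x y < r ->
  exists b : R, [/\ 1 <= b, b < expR r, cle C (b^-1 *: x) y & cle C y (b *: x)].
Proof.
move=> ix iy; have [b0 [b01 h1 h2]] := interior_comparable ix iy.
have /andP[i1 _] := thompson_set_inf (conj b01 (conj h1 h2)).
rewrite /thompson -/(thompson_set x y) => hlt.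
have : inf (thompson_set x y) < expR r.
  by rewrite -(@lnK _ (inf (thompson_set x y))) ?ltr_expR // posrE; lra.
by case/inf_lt => [|b [b1 [hb1 hb2]] hb]; [exists b0 | exists b].
Qed.

Lemma thompson_lt_sym x y r : interior C x -> interior C y ->
  thompson C x y < r -> thompson C y x < r.
Proof.
move=> ix iy /(thompson_lt ix iy) [b [b1 br h1 h2]].
have b0 : 0 < b by lra.
apply: (@le_lt_trans _ _ (ln b)); last first.
  by rewrite -ltr_expR lnK ?posrE.
apply: thompson_le => //; first exact: cle_divl.
by rewrite -[b]invrK; apply: cle_divr; rewrite ?invr_gt0.
Qed.

Lemma tball_common_factor u x y (r : R) : interior C u ->
  tball C u r x -> tball C u r y ->
  exists M : R, [/\ 1 <= M, M < expR r, cle C (M^-1 *: u) x & cle C y (M *: u)].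
Proof.
move=> iu [ix /(thompson_lt iu ix) [b1 [b11 b1r lo _]]].
move=> [iy /(thompson_lt iu iy) [b2 [b21 b2r _ hi]]].
have Cu := interior_subset iu.
set M := Num.max b1 b2; have M1 : 1 <= M by rewrite le_max b11.
exists M; split => //; first by rewrite gt_max b1r b2r.
- apply: (cle_trans hC _ lo); apply: (cle_scalar hC Cu).
  by rewrite lef_pV2 ?posrE ?le_max ?lexx //; lra.
- by apply: (cle_trans hC hi); apply: (cle_scalar hC Cu); rewrite le_max lexx orbT.
Qed.

Lemma thompson_squeeze u lo hi w (M c : R) : C u -> 1 <= M -> 1 <= c ->
  cle C (M^-1 *: u) lo -> cle C hi (M *: u) ->
  cle C lo (c *: w) -> cle C w (c *: hi) -> thompson C u w <= ln (c * M).
Proof.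
move=> Cu M1 c1 loM hiM lo_w w_hi; have c0 : 0 < c by lra.
apply: thompson_le; first by rewrite -[1]mulr1 ler_pM //; lra.
- have cV0 : 0 <= c^-1 by rewrite invr_ge0 ltW.
  rewrite invfM -scalerA; apply: (cle_trans hC (cle_scale hC cV0 loM)).
  exact: cle_divl.
- by rewrite -scalerA; apply: (cle_trans hC w_hi); apply: cle_scale => //; lra.
Qed.

End Thompson.

Section ThompsonBall.
Variables (R : realType) (V : normedModType R) (C : set V).
Hypothesis hC : closed_cone C.
Variable u : V.
Hypothesis iu : interior C u.

Lemma tcball_interior (Rad : R) z : tcball C u Rad z -> interior C z.
Proof.
case=> lo _; apply: (interior_cle hC _ lo).
by apply: (interior_scale hC _ iu); apply: expR_gt0.
Qed.

Lemma tcball_mono (Rad Rad' : R) : Rad <= Rad' -> tcball C u Rad `<=` tcball C u Rad'.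
Proof.
move=> le_Rad z [lo hi]; have Cu := interior_subset iu; split.
- by apply: (cle_trans hC _ lo); apply: (cle_scalar hC Cu); rewrite ler_expR lerN2.
- by apply: (cle_trans hC hi); apply: (cle_scalar hC Cu); rewrite ler_expR.
Qed.

Lemma tcball_cover x : interior C x -> exists Rad : R, tcball C u Rad x.
Proof.
move=> ix; have [b [b1 h1 h2]] := interior_comparable hC iu ix.
have b0 : 0 < b by lra.
by exists (ln b); rewrite /tcball expRN lnK ?posrE.
Qed.

Lemma tcball_thompson (Rad : R) z w : 0 <= Rad ->
  tcball C u Rad z -> tcball C u Rad w -> thompson C z w <= 2 * Rad.
Proof.
move=> Rad0 [lo_z hi_z] [lo_w hi_w].
have e0 : 0 < expR (2 * Rad) by apply: expR_gt0.
rewrite -[X in _ <= X]expRK; apply: thompson_le.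
- by rewrite -[X in X <= _]expR0 ler_expR; lra.
- rewrite -expRN; apply: (cle_trans hC _ lo_w).
  have := cle_scale hC (ltW (expR_gt0 (- (2 * Rad)))) hi_z.
  by rewrite scalerA -expRD; congr cle; congr (expR _ *: _); lra.
- apply: (cle_trans hC) hi_w _.
  have := cle_scale hC (ltW e0) lo_z.
  by rewrite scalerA -expRD; congr cle; congr (expR _ *: _); lra.
Qed.

End ThompsonBall.

Section Normality.
Variables (R : realType) (K : R).
Hypothesis K0 : 0 <= K.
Variables (V : normedModType R) (C : set V).
Hypothesis hC : closed_cone C.
Hypothesis normalK : forall x y, cle C 0 x -> cle C x y -> `|x| <= K * `|y|.

Lemma interval_norm_bound a b z : cle C a z -> cle C z b ->
  `|z| <= K * `|b - a| + `|a|.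
Proof.
move=> az zb.
have h0 : cle C 0 (z - a) by rewrite /cle subr0.
have h1 : cle C (z - a) (b - a) by rewrite /cle opprB addrA subrK.
have := normalK h0 h1; have := ler_distD a z 0; rewrite !subr0; lra.
Qed.

Lemma thompson_norm_close x y (b : R) : C x -> 1 <= b ->
  cle C (b^-1 *: x) y -> cle C y (b *: x) -> `|y - x| <= (2 * K + 1) * (b - 1) * `|x|.
Proof.
move=> Cx b1 lo hi; have b0 : 0 < b by lra.
have bV0 : 0 < b^-1 by rewrite invr_gt0.
have bV1 : b^-1 <= 1 by rewrite invf_le1.
have bbV : b * b^-1 = 1 by rewrite mulfV ?gt_eqF.
have h0 : cle C 0 (y - b^-1 *: x) by rewrite /cle subr0.
have h1 : cle C (y - b^-1 *: x) ((b - b^-1) *: x).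
  by rewrite /cle scalerBl opprB addrA subrK.
have := normalK h0 h1; rewrite normrZ ger0_norm; last by nra.
have := ler_distD (b^-1 *: x) y x.
have -> : b^-1 *: x - x = (b^-1 - 1) *: x by rewrite scalerBl scale1r.
rewrite normrZ ler0_norm ?subr_le0 // => tri bound.
have nx := normr_ge0 x.
have : K * ((b - b^-1) * `|x|) <= K * (2 * (b - 1) * `|x|).
  by apply: ler_wpM2l => //; apply: ler_wpM2r => //; nra.
have : (1 - b^-1) * `|x| <= (b - 1) * `|x| by apply: ler_wpM2r => //; nra.
lra.
Qed.

Lemma norm_close_of_thompson_close x y (B eta : R) :
  interior C x -> interior C y -> `|x| <= B -> 0 < eta ->
  thompson C x y < ln (1 + eta) -> `|y - x| <= (2 * K + 1) * eta * B.
Proof.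
move=> ix iy xB eta0 /(thompson_lt hC ix iy) [b [b1 b_lt lo hi]].
rewrite lnK ?posrE in b_lt; last by lra.
apply: le_trans (thompson_norm_close (interior_subset ix) b1 lo hi) _.
have xb : (b - 1) * `|x| <= eta * B by apply: ler_pM; rewrite ?normr_ge0 //; lra.
by rewrite -!mulrA; apply: ler_wpM2l => //; rewrite addr_ge0 ?mulr_ge0.
Qed.

Lemma increasing_norm_bound (s : nat -> V) :
  C 0 -> (forall k, cle C (s k) (s k.+1)) ->
  forall m j n, (m <= j)%N -> (j <= n)%N -> `|s j - s m| <= K * `|s n - s m|.
Proof.
move=> C0 step m j n mj jn; have mono := cle_chain hC C0 step.
apply: normalK; first by rewrite /cle subr0; exact: mono.
by rewrite /cle opprB addrA subrK; exact: mono.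
Qed.

Lemma decreasing_norm_bound (s : nat -> V) :
  C 0 -> (forall k, cle C (s k.+1) (s k)) ->
  forall m j n, (m <= j)%N -> (j <= n)%N -> `|s j - s m| <= K * `|s n - s m|.
Proof.
move=> C0 step m j n mj jn.
have step' k : cle C (- s k) (- s k.+1) by rewrite /cle opprK addrC; exact: step.
by have := increasing_norm_bound C0 step' mj jn; rewrite -!opprD !normrN.
Qed.

Lemma thompson_balls_cvg (w : nat -> V) u : interior C u ->
  (forall r : R, 0 < r -> \forall k \near \oo, tball C u r (w k)) ->
  (fun k => thompson C (w k) u) @ \oo --> 0 /\ w @ \oo --> u.
Proof.
move=> iu balls; split; apply/cvgrPdist_lt => e e0.
  near=> k; have [iw uw] : tball C u e (w k) by near: k; exact: balls.
  rewrite sub0r normrN ger0_norm; first exact: thompson_lt_sym.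
  exact: thompson_ge0.
have K1 : 0 < 2 * K + 1 by rewrite ltr_wpDl ?mulr_ge0.
have Ku0 : 0 < (2 * K + 1) * (`|u| + 1) by rewrite mulr_gt0 // ltr_wpDl.
set eta := e / ((2 * K + 1) * (`|u| + 1)).
have eta0 : 0 < eta by apply: divr_gt0.
have eta_e : (2 * K + 1) * eta * `|u| < e.
  have -> : e = (2 * K + 1) * eta * (`|u| + 1) by rewrite /eta mulrAC mulrC divfK ?gt_eqF.
  by rewrite ltr_pM2l ?ltrDl //; exact: mulr_gt0.
near=> k; have [iw uw] : tball C u (ln (1 + eta)) (w k).
  by near: k; apply: balls; apply: ln_gt0; rewrite ltrDl.
rewrite distrC; apply: le_lt_trans eta_e.
exact: (norm_close_of_thompson_close iu iw (lexx _) eta0 uw).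
Unshelve. all: end_near.
Qed.

End Normality.

Section MonotoneConvergence.
Variables (R : realType) (V : completeNormedModType R).

Definition seq_totally_bounded (s : nat -> V) : Prop :=
  forall e : R, 0 < e -> exists (n : nat) (A : nat -> set V),
    (forall i x y, A i x -> A i y -> `|x - y| <= e) /\
    (forall k, exists2 i, (i < n)%N & A i (s k)).

Lemma frequent_piece (s : nat -> V) (A : nat -> set V) n N :
  (forall k, (N <= k)%N -> exists2 i, (i < n)%N & A i (s k)) ->
  exists2 i, (i < n)%N & forall j, exists2 m, (j <= m)%N & A i (s m).
Proof.
elim: n N => [|n IH] N cover; first by have [] := cover N (leqnn N).
have [freq|/existsNP [J /forall2NP rare]] :=
  pselect (forall j, exists2 m, (j <= m)%N & A n (s m)); first by exists n.
have [|i i_lt freq] := IH (maxn N J).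
  move=> k; rewrite geq_max => /andP [Nk Jk].
  have [i] := cover k Nk; rewrite ltnS leq_eqVlt => /orP [/eqP -> | i_lt] Ai.
    by case: (rare k) => [/(_ Jk)|/(_ Ai)].
  by exists i.
by exists i => //; apply: ltnW.
Qed.

Lemma controlled_totally_bounded_cvg (s : nat -> V) (K : R) : 0 <= K ->
  (forall m j n, (m <= j)%N -> (j <= n)%N -> `|s j - s m| <= K * `|s n - s m|) ->
  seq_totally_bounded s -> exists l : V, s @ \oo --> l.
Proof.
move=> K0 control tb; apply/cvg_ex; apply: cauchy_cvg; apply: cauchy_exP => eps eps0.
have K1 : 0 < 2 * (K + 1) by lra.
set e := eps / (2 * (K + 1)); have e0 : 0 < e by apply: divr_gt0.
have Ke : K * e < eps.
  have he : e * (2 * (K + 1)) = eps by rewrite divfK ?gt_eqF.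
  by rewrite -he; nra.
have [n [A [diamA cover]]] := tb e e0.
have [i _ freq] := frequent_piece (N := 0) (fun k _ => cover k).
have [m0 _ Am0] := freq 0%N.
exists (s m0); exists m0 => // j /= m0j; rewrite -ball_normE /= distrC.
have [m jm Am] := freq j.
apply: le_lt_trans (control _ _ _ m0j jm) (le_lt_trans _ Ke).
exact: ler_wpM2l (diamA _ _ _ Am Am0).
Qed.

End MonotoneConvergence.

Section Kuratowski.
Variables (R : realType) (V : normedModType R) (dist : V -> V -> R).

(* The range of an orbit is its first term together with its image under the
   map, so the map cannot decrease its measure of noncompactness. *)
Lemma kuratowski_orbit_le (f : V -> V) (s : nat -> V) :
  (forall k, dist (s k) (s k) <= 0) -> (forall k, s k.+1 = f (s k)) ->
  (kuratowski dist (range s) <= kuratowski dist (f @` range s))%E.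
Proof.
move=> dist0 orbit; apply: ereal_inf_le_tmp => _ [d [d0 [n [A [sub [diam cover]]]]] <-].
exists d => //; split => //.
exists n.+1, (fun i => if i is i'.+1 then A i' else [set s 0%N]); split; [|split].
- case=> [|i] x /=; first by move=> ->; exists 0%N.
  by move=> /sub [_ [k _ <-] <-]; exists k.+1 => //; rewrite orbit.
- case=> [|i] x y /=; last exact: diam.
  by move=> -> ->; apply: le_trans (dist0 _) d0.
- move=> x [[|k] _ <-]; first by exists 0%N.
  have fsk : (f @` range s) (s k.+1) by exists (s k); [exists k | rewrite orbit].
  by have [i [i_lt Ai]] := cover _ fsk; exists i.+1.
Qed.

Lemma kuratowski_orbit_null (f : V -> V) (s : nat -> V) :
  (forall k, dist (s k) (s k) <= 0) -> (forall k, s k.+1 = f (s k)) ->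
  ((0 < kuratowski dist (range s))%E ->
     (kuratowski dist (f @` range s) < kuratowski dist (range s))%E) ->
  (kuratowski dist (range s) <= 0)%E.
Proof.
move=> dist0 orbit condensing; rewrite leNgt; apply/negP => /condensing.
by rewrite ltNge (kuratowski_orbit_le dist0 orbit).
Qed.

Lemma kuratowski_null_cover S : (kuratowski dist S <= 0)%E ->
  forall e : R, 0 < e -> exists n (A : nat -> set V), (forall i, A i `<=` S) /\
    (forall i x y, A i x -> A i y -> dist x y <= e) /\
    (forall x, S x -> exists i, (i < n)%N /\ A i x).
Proof.
move=> null e e0.
have : (kuratowski dist S < e%:E)%E by apply: le_lt_trans null _; rewrite lte_fin.
move/ereal_inf_lt => [_ [d [d0 [n [A [sub [diam cover]]]]] <-]]; rewrite lte_fin => de.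
exists n, A; split => //; split => // i x y Ax Ay.
exact: le_trans (diam _ _ _ Ax Ay) (ltW de).
Qed.

End Kuratowski.

Section Dynamics.
Variables (R : realType) (V : normedModType R) (C : set V) (f : V -> V).
Hypothesis hC : closed_cone C.
Hypothesis hf : forall x, interior C x -> interior C (f x).
Hypothesis hop : order_preserving_on C f.
Hypothesis hsub : subhomogeneous_on C f.

Lemma subhomogeneous_le1 (t : R) x : interior C x -> 0 < t -> t <= 1 ->
  cle C (t *: f x) (f (t *: x)).
Proof.
move=> ix t0 t1; have tV1 : 1 <= t^-1 by rewrite invf_ge1.
have := hsub (interior_scale hC t0 ix) tV1.
rewrite scalerA mulVf ?gt_eqF // scale1r.
have tV0 : 0 < t^-1 by rewrite invr_gt0.
by move/(cle_divl hC tV0); rewrite invrK.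
Qed.

Lemma iter_interior k x : interior C x -> interior C (iter k f x).
Proof. by move=> ix; elim: k => //= k IH; apply: hf. Qed.

Lemma iter_cle k x y : interior C x -> interior C y -> cle C x y ->
  cle C (iter k f x) (iter k f y).
Proof. by move=> ix iy xy; elim: k => //= k IH; apply: hop => //; apply: iter_interior. Qed.

Lemma orbit_increasing x : interior C x -> cle C x (f x) ->
  forall k, cle C (iter k f x) (iter k.+1 f x).
Proof. by move=> ix x_fx k; rewrite iterSr; apply: iter_cle => //; apply: hf. Qed.

Lemma orbit_decreasing x : interior C x -> cle C (f x) x ->
  forall k, cle C (iter k.+1 f x) (iter k f x).
Proof. by move=> ix fx_x k; rewrite iterSr; apply: iter_cle => //; apply: hf. Qed.

(* The limit of an orbit, if it is an interior point, is a fixed point: for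
   [c > 1] the terms eventually lie between [c^-1 l] and [c l], so monotonicity
   and subhomogeneity give [l <= c f(l)] and [f(l) <= c l]. *)
Lemma orbit_limit_fixed (s : nat -> V) l : (forall k, interior C (s k)) ->
  (forall k, s k.+1 = f (s k)) -> s @ \oo --> l -> interior C l -> f l = l.
Proof.
move=> s_int orbit sl il.
have s1l : (fun k => s k.+1) @ \oo --> l by rewrite cvg_shiftS.
apply: (cle_antisym hC); apply: (cle_of_scaled hC) => c c1.
- have cs1l : (fun k => c *: s k.+1) @ \oo --> c *: l by apply: cvgZl_tmp.
  apply: (cle_limit_lower hC cs1l); near=> k.
  have [_ l_le] : cle C (s k) (c *: l) /\ cle C l (c *: s k).
    by near: k; exact: (interior_limit_absorb hC).
  rewrite /= orbit; apply: (cle_trans hC (hop _ _ l_le)) => //.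
    by apply: interior_scale => //; lra.
  by apply: hsub => //; lra.
- apply: (cle_limit_upper hC s1l); near=> k.
  have [le_l _] : cle C (s k) (c *: l) /\ cle C l (c *: s k).
    by near: k; exact: (interior_limit_absorb hC).
  rewrite orbit; apply: (cle_trans hC (hop _ _ le_l)) => //.
    by apply: interior_scale => //; lra.
  by apply: hsub => //; lra.
Unshelve. all: end_near.
Qed.

Variable u : V.
Hypotheses (iu : interior C u) (fu : f u = u).

Lemma tcball_invariant (Rad : R) z : 0 <= Rad ->
  tcball C u Rad z -> tcball C u Rad (f z).
Proof.
move=> Rad0 z_in; have iz := tcball_interior hC iu z_in; case: z_in => lo hi.
have e_gt0 (t : R) : 0 < expR t by apply: expR_gt0.
split.
- apply: (cle_trans hC _ (hop _ iz lo)); last exact: interior_scale.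
  rewrite -{1}fu; apply: subhomogeneous_le1 => //.
  by rewrite -expR0 ler_expR; lra.
- apply: (cle_trans hC (hop iz _ hi)); first exact: interior_scale.
  rewrite -{2}fu; apply: hsub => //.
  by rewrite -[X in X <= _]expR0 ler_expR.
Qed.

Lemma tcball_iter (Rad : R) k z : 0 <= Rad ->
  tcball C u Rad z -> tcball C u Rad (iter k f z).
Proof. by move=> Rad0 z_in; elim: k => //= k IH; apply: tcball_invariant. Qed.

End Dynamics.

Section OrbitsInBall.
Variables (R : realType) (K Rad : R).
Hypotheses (K0 : 0 <= K) (Rad0 : 0 <= Rad).
Variables (V : completeNormedModType R) (C : set V) (f : V -> V).
Hypothesis hC : closed_cone C.
Hypothesis C0 : C 0.
Hypothesis hf : forall x, interior C x -> interior C (f x).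
Hypothesis hop : order_preserving_on C f.
Hypothesis hsub : subhomogeneous_on C f.
Hypothesis normalK : forall x y, cle C 0 x -> cle C x y -> `|x| <= K * `|y|.
Variable u : V.
Hypotheses (iu : interior C u) (fu : f u = u).

Let B := K * `|expR Rad *: u - expR (- Rad) *: u| + `|expR (- Rad) *: u|.

Lemma tcball_norm z : tcball C u Rad z -> `|z| <= B.
Proof. by case=> lo hi; apply: (interval_norm_bound normalK lo hi). Qed.

Section Orbit.
Variable s : nat -> V.
Hypothesis orbit : forall k, s k.+1 = f (s k).
Hypothesis s_in : forall k, tcball C u Rad (s k).

Let range_interior : range s `<=` interior C.
Proof. by move=> _ [k _ <-]; exact: (tcball_interior hC iu (s_in k)). Qed.

(* If [f] is gamma-condensing, the orbit has norm-measure zero. *)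
Lemma gamma_orbit_totally_bounded : gamma_condensing C f -> seq_totally_bounded s.
Proof.
move=> [_ condensing] e e0.
have null : (gamma_mnc (range s) <= 0)%E.
  apply: (kuratowski_orbit_null _ orbit) => [k|]; first by rewrite subrr normr0.
  apply: condensing => //.
  by exists B => _ [k _ <-]; exact: tcball_norm.
have [n [A [_ [diam cover]]]] := kuratowski_null_cover null e0.
exists n, A; split => // k.
by have [i []] := cover (s k) (ex_intro2 _ _ k I erefl); exists i.
Qed.

(* If [f] is tau-condensing, the orbit has Thompson-measure zero, and on the
   ball small Thompson diameter implies small norm diameter. *)
Lemma tau_orbit_totally_bounded : tau_condensing C f -> seq_totally_bounded s.
Proof.
move=> [_ condensing] e e0.
have B0 : 0 <= B := le_trans (normr_ge0 _) (tcball_norm (s_in 0)).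
have K1 : 0 < 2 * K + 1 by rewrite ltr_wpDl ?mulr_ge0.
have BK0 : 0 < (2 * K + 1) * (B + 1) by apply: mulr_gt0 => //; lra.
set eta := e / ((2 * K + 1) * (B + 1)).
have eta0 : 0 < eta by apply: divr_gt0.
have etaB : (2 * K + 1) * eta * B <= e.
  have -> : e = (2 * K + 1) * eta * (B + 1) by rewrite /eta mulrAC mulrC divfK ?gt_eqF.
  by apply: ler_wpM2l; [rewrite mulr_ge0 ?ltW | lra].
have d0 : 0 < ln (1 + eta) / 2 by apply: divr_gt0 => //; apply: ln_gt0; lra.
have null : (tau_mnc C (range s) <= 0)%E.
  apply: (kuratowski_orbit_null _ orbit) => [k|]; first exact: thompson_self.
  apply: condensing => //.
  by exists (2 * Rad) => _ _ [k _ <-] [j _ <-]; apply: tcball_thompson.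
have [n [A [sub [diam cover]]]] := kuratowski_null_cover null d0.
exists n, A; split; last first.
  by move=> k; have [i []] := cover (s k) (ex_intro2 _ _ k I erefl); exists i.
move=> i x y Ax Ay; have [k _ xk] := sub _ _ Ax; have [j _ yj] := sub _ _ Ay.
subst x y.
rewrite distrC; apply: le_trans etaB.
apply: (norm_close_of_thompson_close K0 hC normalK).
- exact: (tcball_interior hC iu (s_in k)).
- exact: (tcball_interior hC iu (s_in j)).
- exact: tcball_norm.
- exact: eta0.
- by apply: le_lt_trans (diam _ _ _ Ax Ay) _; rewrite ltr_pdivrMr //; lra.
Qed.

Lemma monotone_orbit_cvg :
  [\/ regular_cone C, gamma_condensing C f | tau_condensing C f] ->
  (forall k, cle C (s k) (s k.+1)) \/ (forall k, cle C (s k.+1) (s k)) ->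
  exists l : V, s @ \oo --> l.
Proof.
move=> compactness mono.
have control : forall m j n, (m <= j)%N -> (j <= n)%N ->
    `|s j - s m| <= K * `|s n - s m|.
  by case: mono; [exact: increasing_norm_bound | exact: decreasing_norm_bound].
case: compactness => [regular | gamma | tau].
- case: mono => [inc | dec]; last first.
    by apply: regular dec => k; apply: interior_subset; exact: range_interior.
  pose w k := expR Rad *: u - s k.
  have w_dec k : cle C (w k.+1) (w k).
    by rewrite /cle /w opprB addrC addrA subrK; exact: inc.
  have [l wl] := regular w (fun k => (s_in k).2) w_dec.
  exists (expR Rad *: u - l).
  have -> : s = fun k => expR Rad *: u - w k.
    by apply/funext => k; rewrite /w opprB addrC subrK.
  exact: cvgB (cvg_cst _) wl.
- exact: (controlled_totally_bounded_cvg K0 control (gamma_orbit_totally_bounded gamma)).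
- exact: (controlled_totally_bounded_cvg K0 control (tau_orbit_totally_bounded tau)).
Qed.

End Orbit.

Hypothesis compactness : [\/ regular_cone C, gamma_condensing C f | tau_condensing C f].

Lemma monotone_orbit_limit z : tcball C u Rad z ->
  cle C z (f z) \/ cle C (f z) z ->
  exists2 l, (fun k => iter k f z) @ \oo --> l & fixpts C f l.
Proof.
move=> z_in mono.
have iz := tcball_interior hC iu z_in.
have orbit k : iter k.+1 f z = f (iter k f z) by [].
have s_in k : tcball C u Rad (iter k f z).
  exact: (tcball_iter hC hop hsub iu fu k Rad0 z_in).
have [l sl] : exists l : V, (fun k => iter k f z) @ \oo --> l.
  apply: (@monotone_orbit_cvg (fun k => iter k f z) orbit s_in compactness).
  by case: mono => h; [left; apply: orbit_increasing | right; apply: orbit_decreasing].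
have il : interior C l.
  apply: (interior_cle hC (interior_scale hC (expR_gt0 (- Rad)) iu)).
  by apply: (cle_limit_lower hC sl); apply: nearW => k; case: (s_in k).
exists l => //; split => //.
apply: (orbit_limit_fixed hC hop hsub _ orbit sl il) => k.
exact: (tcball_interior hC iu (s_in k)).
Qed.

Lemma tcball_endpoints :
  tcball C u Rad (expR (- Rad) *: u) /\ tcball C u Rad (expR Rad *: u).
Proof.
have le_e : expR (- Rad) <= expR Rad.
  by rewrite ler_expR (le_trans _ Rad0) // oppr_le0.
have Cu := interior_subset iu.
by split; split; first [exact: (cle_refl C0) | exact: (cle_scalar hC Cu le_e)].
Qed.

(* The orbits of the endpoints
   increase resp. decrease to fixed points [lx] and [ly]; every orbit from
   the ball is squeezed between them, and [lx], [ly] are within factor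
   [M < e^r] of [u]. *)
Lemma iterates_enter_ball (r : R) : fixpts C f `<=` tball C u r ->
  exists k, forall y, tcball C u Rad y -> tball C u r (iter k f y).
Proof.
move=> fix_in; have [lo_in hi_in] := tcball_endpoints.
have [lo_up _] := tcball_invariant hC hop hsub iu fu Rad0 lo_in.
have [_ hi_down] := tcball_invariant hC hop hsub iu fu Rad0 hi_in.
have [lx x_lx fix_lx] := monotone_orbit_limit lo_in (or_introl lo_up).
have [ly y_ly fix_ly] := monotone_orbit_limit hi_in (or_intror hi_down).
have [M [M1 Mr lxM lyM]] := tball_common_factor hC iu (fix_in _ fix_lx) (fix_in _ fix_ly).
(* Leave room for a factor [c > 1]; for large [k] the endpoint orbits are
   within factor [c] of their limits. *)
have [c c1 cMr] : exists2 c : R, 1 < c & c * M < expR r.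
  have qM : expR r / M * M = expR r by rewrite divfK ?gt_eqF //; lra.
  have q1 : 1 < expR r / M by rewrite ltr_pdivlMr ?mul1r //; lra.
  by exists ((1 + expR r / M) / 2); [lra | rewrite mulrAC mulrDl mul1r qM; lra].
have c0 : 0 < c by lra.
have [k [lo_k hi_k]] : exists k, cle C lx (c *: iter k f (expR (- Rad) *: u)) /\
    cle C (iter k f (expR Rad *: u)) (c *: ly).
  apply: (@filter_ex _ \oo); near=> k; split.
  - near: k; have := interior_limit_absorb hC fix_lx.1 x_lx c1.
    by apply: filterS => k [].
  - near: k; have := interior_limit_absorb hC fix_ly.1 y_ly c1.
    by apply: filterS => k [].
exists k => y y_in; have iy := tcball_interior hC iu y_in; case: (y_in) => lo hi.
split; first exact: iter_interior.
have [ilo ihi] := (tcball_interior hC iu lo_in, tcball_interior hC iu hi_in).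
apply: (le_lt_trans (thompson_squeeze hC (interior_subset iu) M1 (ltW c1) lxM lyM _ _)).
- by apply: (cle_trans hC lo_k); apply: (cle_scale hC (ltW c0)); exact: iter_cle.
- by apply: (cle_trans hC _ hi_k); exact: iter_cle.
- by rewrite -ltr_expR lnK ?posrE //; apply: mulr_gt0; lra.
Unshelve. all: end_near.
Qed.

End OrbitsInBall.

Section UniqueFixedPoint.
Variables (R : realType) (K : R).
Hypothesis K0 : 0 <= K.
Variables (V : completeNormedModType R) (C : set V) (f : V -> V).
Hypotheses (hC : closed_cone C) (C0 : C 0).
Hypothesis hf : forall x, interior C x -> interior C (f x).
Hypotheses (hop : order_preserving_on C f) (hsub : subhomogeneous_on C f).
Hypothesis normalK : forall x y, cle C 0 x -> cle C x y -> `|x| <= K * `|y|.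
Hypothesis compactness : [\/ regular_cone C, gamma_condensing C f | tau_condensing C f].

(* A unique fixed point [u] attracts every orbit: the starting point lies in
   some closed ball around [u], which is eventually mapped into any [B_r(u)]. *)
Lemma unique_fixed_point_attracts u x : fixpts C f = [set u] -> interior C x ->
  forall r : R, 0 < r -> \forall k \near \oo, tball C u r (iter k f x).
Proof.
move=> fix_u ix r r0; have [iu fu] : fixpts C f u by rewrite fix_u.
have [Rad x_in] := tcball_cover hC iu ix.
have Rad0 : 0 <= Num.max Rad 0 by rewrite le_max lexx orbT.
have {x_in}x_in : tcball C u (Num.max Rad 0) x.
  by apply: (tcball_mono hC iu _ x_in); rewrite le_max lexx.
have fix_in : fixpts C f `<=` tball C u r.
  by move=> z; rewrite fix_u => ->; split => //; apply: le_lt_trans (thompson_self C0 u) r0.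
have [k0 enter] := iterates_enter_ball K0 Rad0 hC C0 hf hop hsub normalK iu fu
  compactness fix_in.
exists k0 => // k /= k0k; rewrite -(subnKC k0k) iterD; apply: enter.
exact: (tcball_iter hC hop hsub iu fu _ Rad0 x_in).
Qed.

End UniqueFixedPoint.

Lemma closed_cone_zero (R : realType) (V : normedModType R) (C : set V) :
  closed_cone C -> (exists x, interior C x) -> C 0.
Proof.
move=> hC [x /interior_subset Cx].
by have := cone_scale hC (lexx 0) Cx; rewrite scale0r.
Qed.

Lemma normal_cone_nonneg (R : realType) (V : normedModType R) (C : set V) :
  normal_cone C -> exists2 K : R, 0 <= K &
    forall x y, cle C 0 x -> cle C x y -> `|x| <= K * `|y|.
Proof.
case=> K normalK; exists `|K| => // x y x0 xy.
by apply: le_trans (normalK _ _ x0 xy) _; rewrite ler_wpM2r ?ler_norm.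
Qed.

Theorem lemma4p3 (R : realType) (V : completeNormedModType R) (C : set V)
  (f : V -> V)
  (hC : closed_cone C) (hnormal : normal_cone C)
  (hint : exists x, interior C x)
  (hf : forall x, interior C x -> interior C (f x))
  (hop : order_preserving_on C f) (hsub : subhomogeneous_on C f)
  (hcomp : [\/ regular_cone C, gamma_condensing C f | tau_condensing C f]) :
  (forall u : V, interior C u -> f u = u ->
     thompson_bounded C (fixpts C f) ->
     forall Rad r : R, 0 < r -> r < Rad -> fixpts C f `<=` tball C u r ->
       exists k : nat, forall y, tcball C u Rad y -> tball C u r (iter k f y))
  /\
  (forall u : V, fixpts C f = [set u]%classic ->
     forall x, interior C x ->
       (fun k => thompson C (iter k f x) u) @ \oo --> 0 /\
       (fun k => iter k f x) @ \oo --> u).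
Proof.
have C0 := closed_cone_zero hC hint.
have [K K0 normalK] := normal_cone_nonneg hnormal.
split.
- move=> u iu fu _ Rad r r0 rR fix_in.
  have Rad0 : 0 <= Rad by apply: ltW; apply: lt_trans rR.
  exact: (iterates_enter_ball K0 Rad0 hC C0 hf hop hsub normalK iu fu hcomp fix_in).
- move=> u fix_u x ix; have [iu _] : fixpts C f u by rewrite fix_u.
  apply: (thompson_balls_cvg K0 hC normalK iu).
  exact: (unique_fixed_point_attracts K0 hC C0 hf hop hsub normalK hcomp fix_u ix).
Qed.
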